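(* Let $A^l\in\mathfrak{so}(q_l)^{p_l}$, $l=1,\dots,n$, be tuples with linearly independent components whose corresponding two-step nilpotent Lie algebras are indecomposable. Then the Lie algebra corresponding to the iterated adjoin $C=(\cdots((A^1+_aA^2)+_aA^3)\cdots)+_aA^n$ is indecomposable. Likewise, the Lie algebra corresponding to $A^1+_a\{A^2,\dots,A^n\}$ is indecomposable.
   Context: Adjoin of two tuples: for $A\in\mathfrak{so}(q_1)^{n_1}$ and $B\in\mathfrak{so}(q_2)^m$, $A+_aB\in\mathfrak{so}(q_1+q_2)^{n_1+m-1}$ has components $\mathrm{diag}(A_i,0)$ for $i<n_1$, $\mathrm{diag}(A_{n_1},B_1)$ for $i=n_1$, and $\mathrm{diag}(0,B_{i-n_1+1})$ for $n_1<i\le n_1+m-1$. Multiple adjoin: $A+_a\{D^1,\dots,D^m\}$ is block diagonal with respect to $\mathbb R^{q_0}\oplus\mathbb R^{q_1}\oplus\dots\oplus\mathbb R^{q_m}$. Its first $p_0-1$ components are $\mathrm{diag}(A_l,0,\dots,0)$. Its $p_0$-th component is $\mathrm{diag}(A_{p_0},D^1_1,\dots,D^m_1)$. Then follow $D^1_2,\dots,D^1_{p_1},D^2_2,\dots,D^m_{p_m}$, each in its own block with zeros elsewhere. For $C\in\mathfrak{so}(q)^p$ with linearly independent components, the corresponding Lie algebra on $\mathbb R^{q+p}$ has $[e_i,e_j]=\sum_k(C_k)_{ij}e_{q+k}$ for $i,j\le q$ and all other brackets zero. Indecomposable means not a direct sum of two nonzero ideals. *)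

(* The paper works over the reals; we state it over an
   arbitrary real field R : realFieldType (which includes the reals). *)
From HB Require Import structures.
From mathcomp Require Import all_boot all_order all_algebra.
Set Implicit Arguments. Unset Strict Implicit. Unset Printing Implicit Defensive.
Import Order.TTheory GRing.Theory Num.Theory.
Local Open Scope ring_scope.

Record tup (R : realFieldType) := Tup {
  tq : nat;
  tp : nat;
  tmx : 'I_tp -> 'M[R]_tq }.
Arguments Tup {R tq tp} tmx.
Arguments tq {R} t.
Arguments tp {R} t.
Arguments tmx {R} t _.

(* k-th component (0-based), or 0 if out of range *)
Definition tget (R : realFieldType) (T : tup R) (k : nat) : 'M[R]_(tq T) :=
  match (insub k : option 'I_(tp T)) with Some i => tmx T i | None => 0 end.

Definition skew_tup (R : realFieldType) (T : tup R) : Prop :=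
  forall i, (tmx T i)^T = - tmx T i.

Definition linindep_tup (R : realFieldType) (T : tup R) : bool :=
  row_free (\matrix_(i < tp T) mxvec (tmx T i)).

(* The Lie bracket on R^{q+p}: [e_i,e_j] = sum_k (C_k)_{ij} e_{q+k} for
   i,j <= q, other basis brackets zero, extended bilinearly. *)
Definition lie_br (R : realFieldType) (q p : nat) (C : 'I_p -> 'M[R]_q)
  (x y : 'rV[R]_(q + p)) : 'rV[R]_(q + p) :=
  row_mx 0 (\row_k ((lsubmx x *m C k *m (lsubmx y)^T) 0 0)).

Definition is_ideal (R : realFieldType) (q p : nat) (C : 'I_p -> 'M[R]_q)
  (I : 'M[R]_(q + p)) : Prop :=
  forall x y : 'rV[R]_(q + p), (y <= I)%MS -> (lie_br C x y <= I)%MS.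

(* direct sum of two nonzero ideals (subspaces given by row spaces) *)
Definition decomposable (R : realFieldType) (q p : nat) (C : 'I_p -> 'M[R]_q) : Prop :=
  exists I J : 'M[R]_(q + p),
    [/\ is_ideal C I /\ is_ideal C J, I != 0, J != 0,
        (I :&: J == (0 : 'M[R]_(q + p)))%MS & (I + J == 1%:M)%MS].

Definition indecomposable_tup (R : realFieldType) (T : tup R) : Prop :=
  ~ decomposable (tmx T).

(* Adjoin A +_a B of two tuples (as in the paper, requires tp A, tp B >= 1). *)
Definition adjoin (R : realFieldType) (A B : tup R) : tup R :=
  @Tup R (tq A + tq B) (tp A + tp B).-1 (fun i =>
    let k := val i in
    block_mx (if (k < tp A)%N then tget A k else 0) 0 0
             (if (tp A <= k.+1)%N then tget B (k.+1 - tp A) else 0)).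

(* Attaching D to T at the (0-based) component j: components k < tp T are
   diag(T_k, D_1 if k = j else 0); the remaining ones are diag(0, D_2),...,
   diag(0, D_{tp D}). *)
Definition attach_at (R : realFieldType) (j : nat) (T D : tup R) : tup R :=
  @Tup R (tq T + tq D) (tp T + tp D).-1 (fun i =>
    let k := val i in
    block_mx (if (k < tp T)%N then tget T k else 0) 0 0
             (if k == j then tget D 0
              else if (tp T <= k)%N then tget D (k.+1 - tp T) else 0)).

(* Multiple adjoin A +_a {D^1,...,D^m}: block diagonal w.r.t.
   R^{q0} + R^{q1} + ... + R^{qm}; first p0-1 components diag(A_l,0,..,0),
   the p0-th is diag(A_{p0}, D^1_1, ..., D^m_1), then D^1_2..D^1_{p1},
   D^2_2, ..., D^m_{pm}, each in its own block. *)
Definition multi_adjoin (R : realFieldType) (A : tup R) (Ds : seq (tup R)) : tup R :=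
  foldl (attach_at (tp A).-1) A Ds.

From HB Require Import structures.
From mathcomp Require Import all_boot all_order all_algebra zify.
From Stdlib Require List.
From Stdlib Require Import FunctionalExtensionality.
Set Implicit Arguments. Unset Strict Implicit. Unset Printing Implicit Defensive.
Import Order.TTheory GRing.Theory Num.Theory.
Local Open Scope ring_scope.

(* For a tuple C = (C_1, ..., C_p) of q x q matrices, the bracket of the
   associated algebra R^q + R^p is [x, y] = (0, bform C x_1 y_1), where
   bform C u v = (u C_k v^T)_k.  When the C_k are linearly independent the
   values of bform span R^p, and then decomposability can be read off R^q:
   the Lie algebra of C is decomposable iff some idempotent a <> 0, 1 of R^q
   is "reducing", i.e. bform x (y a) = bform x y d for some d on R^p (the
   projection onto one ideal along the other is block triangular).  Hence an
   indecomposable algebra has no vector u with bform _ u = 0.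
   The key gluing lemma: if the components of C are block diagonal, the
   first blocks being combinations of a tuple T and the second ones of a
   tuple D along isometric embeddings E1, E2 of coordinates that cover R^p
   and share one coordinate, then C is indecomposable when T and D are: a
   reducing idempotent of C is block diagonal, each block is 0 or 1, and the
   shared coordinate forces the same choice.  Both attaching operations of
   the paper are such gluings (adjoin attaches at the last component), so
   the theorem follows by induction along the list. *)

Section TwoStepAlgebra.
Variables (R : realFieldType) (q p : nat) (C : 'I_p -> 'M[R]_q).

Definition bform (u v : 'rV[R]_q) : 'rV[R]_p := \row_k (u *m C k *m v^T) 0 0.

Lemma lie_brE x y : lie_br C x y = row_mx 0 (bform (lsubmx x) (lsubmx y)).
Proof. by []. Qed.

Lemma bformDr u v w : bform u (v + w) = bform u v + bform u w.
Proof.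
apply/rowP => k; rewrite !mxE -big_split; apply: eq_bigr => j _.
by rewrite !mxE mulrDr.
Qed.

Lemma bformZr u c v : bform u (c *: v) = c *: bform u v.
Proof.
apply/rowP => k; rewrite !mxE mulr_sumr; apply: eq_bigr => j _.
by rewrite !mxE mulrCA.
Qed.

Lemma bform0r u : bform u 0 = 0.
Proof. by rewrite -(scale0r 0) bformZr scale0r. Qed.

Lemma bformBr u v w : bform u (v - w) = bform u v - bform u w.
Proof. by rewrite bformDr -scaleN1r bformZr scaleN1r. Qed.

Lemma bform0l v : bform 0 v = 0.
Proof.
by apply/rowP => k; rewrite !mxE !mul0mx big1 // => j _; rewrite mxE mul0r.
Qed.

Lemma lie_brD x y z : lie_br C x (y + z) = lie_br C x y + lie_br C x z.
Proof. by rewrite !lie_brE linearD /= bformDr add_row_mx addr0. Qed.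

Lemma lie_brB x y z : lie_br C x (y - z) = lie_br C x y - lie_br C x z.
Proof. by rewrite !lie_brE linearB /= bformBr opp_row_mx add_row_mx subr0. Qed.

Lemma bform_delta i j :
  bform (delta_mx 0 i) (delta_mx 0 j) = \row_k C k i j.
Proof.
by apply/rowP => k; rewrite [LHS]mxE [RHS]mxE -rowE trmx_delta -colE !mxE.
Qed.

(* The values of [bform] span R^p: no nonzero linear map kills all of them.
   This is where linear independence of the components enters. *)
Definition spanning : Prop :=
  forall m (d : 'M[R]_(p, m)), (forall x y, bform x y *m d = 0) -> d = 0.

(* An idempotent [P] <> 0, 1 commuting with every [ad x] (acting on row
   vectors from the right): its image and kernel are complementary ideals. *)
Definition splitting (P : 'M[R]_(q + p)) : Prop :=
  [/\ P *m P = P, P != 0, P != 1%:M &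
      forall x z, lie_br C x (z *m P) = lie_br C x z *m P].

Lemma decomposable_splitting : decomposable C -> exists P, splitting P.
Proof.
case=> I [J [[idI idJ] I0 J0 /eqmx0P capIJ /andP[_ sumIJ]]].
pose P := proj_mx I J.
have PI (u : 'rV_(q + p)) : (u <= I)%MS -> u *m P = u := proj_mx_id capIJ.
have PJ (u : 'rV_(q + p)) : (u <= J)%MS -> u *m P = 0 := proj_mx_0 capIJ.
have PJc (u : 'rV_(q + p)) : (u - u *m P <= J)%MS.
  exact/proj_mx_compl_sub/(submx_trans (submx1 u)).
exists P; split; first exact: proj_mx_proj.
- apply: contraNneq I0 => P0; apply/eqP/row_matrixP => i.
  by rewrite row0 -(PI _ (row_sub i I)) P0 mulmx0.
- apply: contraNneq J0 => P1; apply/eqP/row_matrixP => i.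
  by rewrite row0 -(PJ _ (row_sub i J)) P1 mulmx1.
- move=> x z; rewrite -[in RHS](subrK (z *m P) z) addrC lie_brD mulmxDl.
  by rewrite (PJ _ (idJ _ _ (PJc z))) addr0 (PI _ (idI _ _ (proj_mx_sub I J _))).
Qed.

Lemma splitting_decomposable P : splitting P -> decomposable C.
Proof.
case=> PP P0 P1 comm.
have ideal (Q : 'M_(q + p)) :
    (forall x z, lie_br C x (z *m Q) = lie_br C x z *m Q) -> is_ideal C Q.
  by move=> commQ x y /submxP[D ->]; rewrite commQ submxMl.
exists P, (1%:M - P); split; [split | by [] | by rewrite subr_eq0 eq_sym | |].
- exact: ideal.
- by apply: ideal => x z; rewrite !mulmxBr !mulmx1 lie_brB comm.
- apply/eqmx0P/eqP; rewrite -submx0; apply/row_subP => i.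
  have := row_sub i (P :&: (1%:M - P))%MS.
  rewrite sub_capmx => /andP[/submxP[u eu] /submxP[v ev]].
  have -> : row i (P :&: (1%:M - P))%MS = row i (P :&: (1%:M - P))%MS *m P.
    by rewrite eu -mulmxA PP.
  by rewrite {1}ev -mulmxA mulmxBl mul1mx PP subrr mulmx0 sub0mx.
- apply/andP; split; first exact: submx1.
  have sumP : P + (1%:M - P) = 1%:M by rewrite addrC subrK.
  by rewrite -[X in (X <= _)%MS]sumP addmx_sub_adds.
Qed.

Definition reducing (a : 'M[R]_q) (d : 'M[R]_p) : Prop :=
  forall x y, bform x (y *m a) = bform x y *m d.

Lemma bformMr x (s : 'M[R]_1) u : bform x (s *m u) = s 0 0 *: bform x u.
Proof. by rewrite {1}(mx11_scalar s) mul_scalar_mx bformZr. Qed.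

Hypothesis spanC : spanning.

Lemma reducing_splitting a d : a *m a = a -> a != 0 -> a != 1%:M ->
  reducing a d -> splitting (block_mx a 0 0 d).
Proof.
move=> aa a0 a1 red.
have dd : d *m d = d.
  apply/eqP; rewrite -subr_eq0; apply/eqP; apply: spanC => x y.
  by rewrite mulmxBr mulmxA -!red -mulmxA aa subrr.
split.
- by rewrite mulmx_block !mulmx0 !mul0mx !addr0 !add0r aa dd.
- apply: contraNneq a0 => /eqP; rewrite -(block_mx0 R q p q p).
  by case/eqP/eq_block_mx => ->.
- apply: contraNneq a1 => /eqP; rewrite (scalar_mx_block q p).
  by case/eqP/eq_block_mx => ->.
- move=> x z; rewrite !lie_brE mul_row_block !mul0mx !mulmx0 !addr0 add0r.
  by rewrite -{1}(hsubmxK z) mul_row_block row_mxKl !mulmx0 addr0 red.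
Qed.

(* Conversely, a splitting idempotent is block upper triangular and its
   upper left block is a nontrivial reducing idempotent. *)
Lemma splitting_reducing P : splitting P ->
  exists a d, [/\ a *m a = a, a != 0, a != 1%:M & reducing a d].
Proof.
case=> PP P0 P1 comm.
set a := ulsubmx P; set b := ursubmx P; set c := dlsubmx P; set d := drsubmx P.
have Pb : P = block_mx a b c d by rewrite submxK.
have rel x1 y1 y2 :
    0 = bform x1 y1 *m c /\ bform x1 (y1 *m a + y2 *m c) = bform x1 y1 *m d.
  have := comm (row_mx x1 0) (row_mx y1 y2).
  rewrite !lie_brE Pb mul_row_block !row_mxKl mul_row_block !mul0mx !add0r.
  by move/eq_row_mx.
have c0 : c = 0 by apply: spanC => x y; have [] := rel x y 0.
have red : reducing a d.
  by move=> x y; have [_] := rel x y 0; rewrite c0 mulmx0 addr0.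
move: PP; rewrite Pb c0 mulmx_block !mulmx0 !mul0mx !addr0 add0r.
case/eq_block_mx => aa bb _ dd.
exists a, d; split => //.
- apply: contraNneq P0 => a0.
  have d0 : d = 0 by apply: spanC => x y; rewrite -red a0 mulmx0 bform0r.
  by move: bb; rewrite Pb a0 d0 c0 mul0mx mulmx0 addr0 => <-; rewrite block_mx0.
- apply: contraNneq P1 => a1.
  have d1 : d = 1%:M.
    apply/eqP; rewrite -subr_eq0; apply/eqP; apply: spanC => x y.
    by rewrite mulmxBr mulmx1 -red a1 mulmx1 subrr.
  have b0 : b = 0 by apply: (addIr b); rewrite add0r -{3}bb a1 d1 mul1mx mulmx1.
  by rewrite Pb a1 b0 c0 d1 scalar_mx_block.
Qed.

Lemma decomposable_reducing : decomposable C <->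
  exists a d, [/\ a *m a = a, a != 0, a != 1%:M & reducing a d].
Proof.
split; first by case/decomposable_splitting => P /splitting_reducing.
case=> a [d [aa a0 a1 red]].
exact: splitting_decomposable (reducing_splitting aa a0 a1 red).
Qed.

Lemma indecomposable_reducing a d : ~ decomposable C -> a *m a = a ->
  reducing a d -> a = 0 \/ a = 1%:M.
Proof.
move=> indec aa red; case: (eqVneq a 0) => [|a0]; first by left.
case: (eqVneq a 1%:M) => [|a1]; first by right.
by case: indec; apply/decomposable_reducing; exists a, d.
Qed.

(* An indecomposable spanning algebra with p > 0 has no vector of R^q
   orthogonal to everything for [bform]: otherwise the rank one projection
   onto it would be reducing. *)
Lemma radical_trivial u : (0 < p)%N -> ~ decomposable C ->
  (forall x, bform x u = 0) -> u = 0.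
Proof.
move=> p0 indec uo; apply/eqP/negPn/negP => /matrix0Pn[i0 [i ui]].
rewrite (ord1 i0) in ui.
pose w : 'rV[R]_q := (u 0 i)^-1 *: delta_mx 0 i.
have uw : u *m w^T = 1%:M.
  apply/rowP => k; rewrite (ord1 k) !mxE (bigD1 i) //= big1 => [|j /negPf ji].
    by rewrite !mxE !eqxx mulr1 mulfV ?addr0.
  by rewrite !mxE ji andbF !mulr0.
have red : reducing (w^T *m u) 0.
  by move=> x y; rewrite mulmxA bformMr uo scaler0 mulmx0.
have aa : w^T *m u *m (w^T *m u) = w^T *m u.
  by rewrite mulmxA -(mulmxA w^T) uw mulmx1.
have [a0|a1] := indecomposable_reducing indec aa red.
  by move/eqP: ui; apply; rewrite -[u]mul1mx -uw -mulmxA a0 mulmx0 mxE.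
have /matrixP/(_ (Ordinal p0) (Ordinal p0)) : (1%:M : 'M[R]_p) = 0.
  by apply: spanC => x y; rewrite mulmx1 -(mulmx1 y) -a1 red mulmx0.
by rewrite !mxE eqxx; move/eqP; rewrite oner_eq0.
Qed.

End TwoStepAlgebra.

(* Linearly independent components make [bform] spanning: each column of a
   map killing all values of [bform] gives a vanishing combination of the C_k. *)
Lemma linindep_spanning (R : realFieldType) (T : tup R) :
  linindep_tup T -> spanning (tmx T).
Proof.
move=> free m d zero_d; apply/matrixP => k c.
pose r : 'rV[R]_(tp T) := (col c d)^T.
have comb : \sum_l r 0 l *: tmx T l = 0.
  apply/matrixP => i j; rewrite [RHS]mxE.
  transitivity ((bform (tmx T) (delta_mx 0 i) (delta_mx 0 j) *m d) 0 c).
    by rewrite bform_delta mxE summxE; apply: eq_bigr => l _; rewrite !mxE mulrC.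
  by rewrite zero_d mxE.
set M := \matrix_(l < tp T) mxvec (tmx T l).
have : r *m M = 0 *m M.
  rewrite mul0mx mulmx_sum_row.
  transitivity (mxvec (\sum_l r 0 l *: tmx T l)); last by rewrite comb linear0.
  by rewrite linear_sum; apply: eq_bigr => l _; rewrite rowK linearZ.
by move/(row_free_inj free)/rowP/(_ k); rewrite !mxE.
Qed.

Lemma orthonormal_row_neq0 (R : realFieldType) m n (E : 'M[R]_(m, n)) i :
  E *m E^T = 1%:M -> row i E != 0.
Proof.
move=> EE; apply/eqP => Ei0.
have /rowP/(_ i) : row i (E *m E^T) = 0 by rewrite row_mul Ei0 mul0mx.
by rewrite EE !mxE eqxx => /eqP; rewrite oner_eq0.
Qed.

Lemma orthonormal_cancel (R : realFieldType) m n k (E : 'M[R]_(m, n))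
    (X Y : 'M[R]_(k, m)) :
  E *m E^T = 1%:M -> X *m E = Y *m E -> X = Y.
Proof. by move=> EE XY; rewrite -(mulmx1 X) -(mulmx1 Y) -EE !mulmxA XY. Qed.

Lemma embedded_reducing (R : realFieldType) q p1 p (T : 'I_p1 -> 'M[R]_q)
    (E : 'M[R]_(p1, p)) (a : 'M[R]_q) (d : 'M[R]_p) :
  spanning T -> ~ decomposable T -> E *m E^T = 1%:M -> a *m a = a ->
  (forall x y, bform T x (y *m a) *m E = bform T x y *m E *m d) ->
  (a = 0 /\ E *m d = 0) \/ (a = 1%:M /\ E *m d = E).
Proof.
move=> spanT indecT EE aa rel.
have red : reducing T a (E *m d *m E^T).
  by move=> x y; rewrite -[LHS]mulmx1 -EE mulmxA rel !mulmxA.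
have [a0|a1] := indecomposable_reducing spanT indecT aa red; [left|right].
- split=> //; apply: spanT => x y.
  by rewrite mulmxA -rel a0 mulmx0 bform0r mul0mx.
- split=> //; apply/eqP; rewrite -subr_eq0; apply/eqP; apply: spanT => x y.
  by rewrite mulmxBr mulmxA -rel a1 mulmx1 subrr.
Qed.

Lemma bilinear_sum (R : realFieldType) q m (c : 'I_m -> R)
    (M : 'I_m -> 'M[R]_q) (x y : 'rV[R]_q) :
  (x *m (\sum_i c i *: M i) *m y^T) 0 0 = \sum_i c i * (x *m M i *m y^T) 0 0.
Proof.
rewrite mulmx_sumr mulmx_suml summxE; apply: eq_bigr => i _.
by rewrite -scalemxAr -scalemxAl mxE.
Qed.

Section Gluing.
Variables (R : realFieldType) (q1 q2 p p1 p2 : nat).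
Variables (T : 'I_p1 -> 'M[R]_q1) (D : 'I_p2 -> 'M[R]_q2).
Variables (E1 : 'M[R]_(p1, p)) (E2 : 'M[R]_(p2, p)).

(* The tuple whose k-th component is diag(sum_i (E1)_ik T_i, sum_i (E2)_ik D_i):
   both adjoin operations are of this form for suitable selection matrices. *)
Definition glue (k : 'I_p) : 'M[R]_(q1 + q2) :=
  block_mx (\sum_i E1 i k *: T i) 0 0 (\sum_i E2 i k *: D i).

Lemma bform_glue x1 x2 y1 y2 :
  bform glue (row_mx x1 x2) (row_mx y1 y2) =
  bform T x1 y1 *m E1 + bform D x2 y2 *m E2.
Proof.
apply/rowP => k; rewrite [LHS]mxE tr_row_mx mul_row_block !mulmx0 addr0 add0r.
rewrite mul_row_col mxE !bilinear_sum !mxE; congr (_ + _); apply: eq_bigr => i _.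
  by rewrite !mxE mulrC.
by rewrite !mxE mulrC.
Qed.

Hypothesis cover : forall k : 'I_p,
  (exists i, row i E1 = delta_mx 0 k) \/ (exists i, row i E2 = delta_mx 0 k).

Lemma glue_spanning : spanning T -> spanning D -> spanning glue.
Proof.
move=> spanT spanD m d zero_d.
have E1d : E1 *m d = 0.
  apply: spanT => x y; have := zero_d (row_mx x 0) (row_mx y 0).
  by rewrite bform_glue bform0l mul0mx addr0 mulmxA.
have E2d : E2 *m d = 0.
  apply: spanD => x y; have := zero_d (row_mx 0 x) (row_mx 0 y).
  by rewrite bform_glue bform0l mul0mx add0r mulmxA.
apply/row_matrixP => k; rewrite row0 rowE.
by case: (cover k) => -[i <-]; rewrite -row_mul ?E1d ?E2d row0.
Qed.

Hypotheses (EE1 : E1 *m E1^T = 1%:M) (EE2 : E2 *m E2^T = 1%:M).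
Hypothesis shared : exists i1 i2, row i1 E1 = row i2 E2.

Lemma glue_reducing_rel a d : reducing glue a d -> forall x1 x2 y1 y2,
  bform T x1 (y1 *m ulsubmx a + y2 *m dlsubmx a) *m E1 +
  bform D x2 (y1 *m ursubmx a + y2 *m drsubmx a) *m E2 =
  (bform T x1 y1 *m E1 + bform D x2 y2 *m E2) *m d.
Proof.
by move=> red x1 x2 y1 y2; rewrite -!bform_glue -mul_row_block submxK red.
Qed.

(* Gluing lemma: a reducing idempotent of the glued algebra is block diagonal
   (the summands have no radical), each block is trivial by indecomposability
   of the summands, and the shared coordinate forces the same choice. *)
Lemma glue_indecomposable : spanning glue -> spanning T -> spanning D ->
  (0 < p1)%N -> (0 < p2)%N -> ~ decomposable T -> ~ decomposable D ->
  ~ decomposable glue.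
Proof.
move=> spanC spanT spanD p1_gt0 p2_gt0 indecT indecD.
case/(decomposable_reducing spanC) => a [d [aa a0 a1 /glue_reducing_rel rel]].
have a21 : dlsubmx a = 0.
  apply/row_matrixP => i; rewrite row0 rowE.
  apply: (radical_trivial spanT p1_gt0 indecT) => x.
  apply: (orthonormal_cancel EE1); have := rel x 0 0 (delta_mx 0 i).
  by rewrite !(mul0mx, add0r, addr0, bform0l, bform0r).
have a12 : ursubmx a = 0.
  apply/row_matrixP => i; rewrite row0 rowE.
  apply: (radical_trivial spanD p2_gt0 indecD) => x.
  apply: (orthonormal_cancel EE2); have := rel 0 x (delta_mx 0 i) 0.
  by rewrite !(mul0mx, add0r, addr0, bform0l, bform0r).
have relT x y : bform T x (y *m ulsubmx a) *m E1 = bform T x y *m E1 *m d.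
  by have := rel x 0 y 0; rewrite !(mul0mx, addr0, bform0l).
have relD x y : bform D x (y *m drsubmx a) *m E2 = bform D x y *m E2 *m d.
  by have := rel 0 x 0 y; rewrite !(mul0mx, add0r, bform0l).
move: aa; rewrite -{1 2 3}(submxK a) a12 a21 mulmx_block.
rewrite !mulmx0 !mul0mx !addr0 !add0r => /eq_block_mx[aa11 _ _ aa22].
have [i1 [i2 row12]] := shared.
have rowd : row i1 (E1 *m d) = row i2 (E2 *m d) by rewrite !row_mul row12.
have nz1 := orthonormal_row_neq0 i1 EE1; have nz2 := orthonormal_row_neq0 i2 EE2.
case: (embedded_reducing spanT indecT EE1 aa11 relT) => -[u1 e1];
  case: (embedded_reducing spanD indecD EE2 aa22 relD) => -[u2 e2].
- by move/eqP: a0; apply; rewrite -(submxK a) u1 u2 a12 a21 block_mx0.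
- by move: nz2; rewrite -e2 -rowd e1 row0 eqxx.
- by move: nz1; rewrite -e1 rowd e2 row0 eqxx.
- by move/eqP: a1; apply; rewrite -(submxK a) u1 u2 a12 a21 -scalar_mx_block.
Qed.

End Gluing.

Section Selection.
Variables (R : realFieldType) (m p : nat) (f : 'I_m -> nat).

Definition selmx : 'M[R]_(m, p) := \matrix_(i, k) ((k : nat) == f i)%:R.

Lemma row_selmx i (k : 'I_p) : f i = k -> row i selmx = delta_mx 0 k.
Proof. by move=> fik; apply/rowP => l; rewrite !mxE fik. Qed.

Hypothesis f_inj : injective f.

Lemma selmx_orthonormal : (forall i, (f i < p)%N) -> selmx *m selmx^T = 1%:M.
Proof.
move=> f_lt; apply/matrixP => i i'; rewrite !mxE (bigD1 (Ordinal (f_lt i))) //=.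
rewrite big1 => [|k /negPf kfi].
  by rewrite !mxE eqxx mul1r addr0 eq_sym (inj_eq f_inj) eq_sym.
have /negPf fik : (k : nat) != f i.
  by apply: contraFneq kfi => e; apply/eqP/val_inj.
by rewrite !mxE fik mul0r.
Qed.

Lemma sum_selmx n (X : 'I_m -> 'M[R]_n) (k : 'I_p) i0 :
  f i0 = k -> \sum_i selmx i k *: X i = X i0.
Proof.
move=> fik; rewrite (bigD1 i0) //= big1 => [|i ii0].
  by rewrite !mxE fik eqxx scale1r addr0.
by rewrite !mxE -fik (inj_eq f_inj) eq_sym (negPf ii0) scale0r.
Qed.

Lemma sum_selmx_out n (X : 'I_m -> 'M[R]_n) (k : 'I_p) :
  (forall i, f i != k) -> \sum_i selmx i k *: X i = 0.
Proof.
by move=> fk; rewrite big1 // => i _; rewrite !mxE eq_sym (negPf (fk i)) scale0r.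
Qed.

End Selection.
Arguments selmx {R m} p f.

Section Attach.
Variable R : realFieldType.

Lemma tgetE (T : tup R) k (kT : (k < tp T)%N) : tget T k = tmx T (Ordinal kT).
Proof. by rewrite /tget insubT. Qed.

Definition attach_pos (j n : nat) m (i : 'I_m) : nat :=
  if (i : nat) == 0%N then j else (n + i).-1.

Lemma attach_pos_inj j n m : (j < n)%N -> injective (@attach_pos j n m).
Proof.
move=> jn x y; rewrite /attach_pos => e; apply: ord_inj.
by move: e; case: eqP; case: eqP; lia.
Qed.

Lemma attach_at_glue j (T D : tup R) : (j < tp T)%N -> (0 < tp D)%N ->
  tmx (attach_at j T D) =
  glue (tmx T) (tmx D) (selmx _ (@nat_of_ord (tp T)))
                       (selmx _ (@attach_pos j (tp T) (tp D))).
Proof.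
move=> jT pD; apply: functional_extensionality => -[k kP]; rewrite /glue /=.
have posD : injective (@attach_pos j (tp T) (tp D)) := attach_pos_inj jT.
congr block_mx.
  case: (ltnP k (tp T)) => kT.
    by rewrite (tgetE kT) (sum_selmx (@ord_inj _) _ (i0 := Ordinal kT)).
  by rewrite sum_selmx_out // => i; apply/eqP => /=; have := ltn_ord i; lia.
case: eqP => [kj | /eqP kj].
  by rewrite (tgetE pD) (sum_selmx posD _ (i0 := Ordinal pD)) // /attach_pos.
case: (leqP (tp T) k) => kT.
  have kD : (k.+1 - tp T < tp D)%N by move: kP => /=; lia.
  rewrite (tgetE kD) (sum_selmx posD _ (i0 := Ordinal kD)) // /attach_pos /=.
  case: eqP; lia.
rewrite sum_selmx_out // => i; rewrite /attach_pos.
by case: (eqVneq (i : nat) 0%N) => [_ | i0] /=; [rewrite eq_sym | apply/eqP; lia].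
Qed.

(* The invariant carried through the iterated constructions. *)
Definition admissible (T : tup R) : Prop :=
  [/\ (0 < tp T)%N, spanning (tmx T) & ~ decomposable (tmx T)].

(* One attaching step preserves admissibility: the two selection matrices are
   isometric, cover all components and share the component [j]. *)
Lemma attach_admissible j (T D : tup R) : (j < tp T)%N ->
  admissible T -> admissible D -> admissible (attach_at j T D).
Proof.
move=> jT [pT spanT indecT] [pD spanD indecD].
have posD : injective (@attach_pos j (tp T) (tp D)) := attach_pos_inj jT.
have pos_lt (i : 'I_(tp D)) : (attach_pos j (tp T) i < (tp T + tp D).-1)%N.
  by rewrite /attach_pos; case: eqP => /=; have := ltn_ord i; lia.
pose E1 : 'M[R]_(tp T, _) := selmx (tp T + tp D).-1 (@nat_of_ord (tp T)).
pose E2 : 'M[R]_(tp D, _) := selmx (tp T + tp D).-1 (@attach_pos j (tp T) (tp D)).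
have cover (k : 'I_(tp T + tp D).-1) :
    (exists i, row i E1 = delta_mx 0 k) \/ (exists i, row i E2 = delta_mx 0 k).
  case: (ltnP k (tp T)) => kT; [left; exists (Ordinal kT) | right].
    exact: row_selmx.
  have kD : (k.+1 - tp T < tp D)%N by have := ltn_ord k; lia.
  exists (Ordinal kD); apply: row_selmx; rewrite /attach_pos /=; case: eqP; lia.
have spanC := glue_spanning cover spanT spanD.
split; first by rewrite /=; lia.
all: rewrite attach_at_glue //.
apply: glue_indecomposable => //.
- apply: selmx_orthonormal => [|i /=]; first exact: ord_inj.
  by have := ltn_ord i; lia.
- exact: selmx_orthonormal posD pos_lt.
- have jC : (j < (tp T + tp D).-1)%N by lia.
  exists (Ordinal jT), (Ordinal pD).
  by rewrite !(@row_selmx _ _ _ _ _ (Ordinal jC)).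
Qed.

End Attach.

Lemma adjoin_attach (R : realFieldType) (A B : tup R) : (0 < tp A)%N ->
  adjoin A B = attach_at (tp A).-1 A B.
Proof.
move=> pA; rewrite /adjoin /attach_at; congr Tup.
apply: functional_extensionality => k /=; congr block_mx.
case: eqVneq => [-> | kA]; first by rewrite prednK // leqnn subnn.
by rewrite leq_eqVlt ltnS (_ : (tp A == k.+1) = false) //; apply/eqP; lia.
Qed.

Section Iteration.
Variable R : realFieldType.

(* Attaching a list of admissible tuples at a fixed component [j]; the
   number of components never decreases, so [j] stays in range. *)
Lemma foldl_attach_admissible j (T : tup R) (Ds : seq (tup R)) :
  (j < tp T)%N -> admissible T -> (forall D, List.In D Ds -> admissible D) ->
  admissible (foldl (attach_at j) T Ds).
Proof.
elim: Ds T => [|D Ds IH] T //= jT admT admDs.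
have admD : admissible D by apply: admDs; left.
have [pD _ _] := admD.
apply: IH => [||D' D'Ds]; first by rewrite /=; lia.
  exact: attach_admissible.
by apply: admDs; right.
Qed.

Lemma foldl_adjoin_admissible (T : tup R) (Ds : seq (tup R)) :
  admissible T -> (forall D, List.In D Ds -> admissible D) ->
  admissible (foldl (@adjoin R) T Ds).
Proof.
elim: Ds T => [|D Ds IH] T //= admT admDs.
have [pT _ _] := admT.
apply: IH => [|D' D'Ds]; last by apply: admDs; right.
rewrite adjoin_attach //; apply: attach_admissible => //; first lia.
by apply: admDs; left.
Qed.

End Iteration.

Theorem mainTheorem11 (R : realFieldType) (A1 : tup R) (As : seq (tup R)) :
  (forall T, List.In T (A1 :: As) ->
     [/\ (0 < tp T)%N, skew_tup T, linindep_tup T & indecomposable_tup T]) ->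
  indecomposable_tup (foldl (@adjoin R) A1 As) /\
  indecomposable_tup (multi_adjoin A1 As).
Proof.
move=> hyp.
have adm T : List.In T (A1 :: As) -> admissible T.
  by case/hyp => pT _ free indec; split=> //; exact: linindep_spanning.
have admA1 : admissible A1 by apply: adm; left.
have admAs D : List.In D As -> admissible D by move=> DAs; apply: adm; right.
have [pA1 _ _] := admA1.
split; first by have [] := foldl_adjoin_admissible admA1 admAs.
have jA1 : ((tp A1).-1 < tp A1)%N by lia.
by have [] := foldl_attach_admissible jA1 admA1 admAs.
Qed.
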